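(* Consider the block hyper-$g$ regression model with blocks $X_1,\dots,X_k$ ($X_i$ of size $n\times p_i$) satisfying the block orthogonality condition below, and the sequence of problems $\Psi_N$ with data $y_N=\alpha\mathbf 1+X_1\beta_{1(N)}+X_2\beta_2+\dots+X_k\beta_k+\epsilon$, where $X_1,\dots,X_k,\alpha,\beta_2,\dots,\beta_k,\epsilon$ are held fixed and $\|\beta_{1(N)}\|\to\infty$ as $N\to\infty$. Then, as $N\to\infty$, $R_1^2\to1$ and $R_i^2\to0$ for all $i\neq1$.
   Context: Block hyper-$g$ prior with hyperparameter $2<a\le4$: $y\mid\alpha,\beta,\sigma^2\sim N(\alpha\mathbf 1+X\beta,\sigma^2I)$ with $X=(X_1,\dots,X_k)$ of full column rank, $\beta=(\beta_1^T,\dots,\beta_k^T)^T$; $\beta\mid g,\sigma^2\sim N(0,A\sigma^2)$ with $A$ block diagonal with blocks $g_i(X_i^TX_i)^{-1}$; $\pi(\alpha,\sigma^2)\propto1/\sigma^2$; $g_1,\dots,g_k$ independent with densities $\frac{a-2}{2}(1+g_i)^{-a/2}$, $g_i>0$. Block orthogonality condition: the predictors and the response are centered ($\mathbf 1^TX_i=0$, $\mathbf 1^Ty=0$) and $X_i^TX_j=0$ for $i\ne j$. $R_i^2=y^TP_{X_i}y/y^Ty$, where $P_{X_i}$ is the orthogonal projection onto the column space of $X_i$; $n>p+1$ with $p=\sum_ip_i$. *)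

From HB Require Import structures.
From mathcomp Require Import all_boot all_order all_algebra.
From mathcomp Require Import all_classical all_reals all_analysis.
Set Implicit Arguments. Unset Strict Implicit. Unset Printing Implicit Defensive.
Import Order.TTheory GRing.Theory Num.Theory.
Local Open Scope ring_scope.

Definition projmx (R : realType) (n q : nat) (X : 'M[R]_(n, q)) : 'M[R]_n :=
  X *m invmx (X^T *m X) *m X^T.

Definition Rsq (R : realType) (n q : nat) (y : 'cV[R]_n) (X : 'M[R]_(n, q)) : R :=
  (y^T *m projmx X *m y) 0 0 / (y^T *m y) 0 0.

Definition enorm (R : realType) (m : nat) (v : 'cV[R]_m) : R :=
  Num.sqrt ((v^T *m v) 0 0).

Definition ones (R : realType) (n : nat) : 'cV[R]_n := const_mx 1.

From HB Require Import structures.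
From mathcomp Require Import all_boot all_order all_algebra.
From mathcomp Require Import all_classical all_reals all_analysis.
From mathcomp Require Import lra.
Import Order.TTheory GRing.Theory Num.Theory.
Import numFieldNormedType.Exports.
Local Open Scope classical_set_scope.
Local Open Scope ring_scope.

(* Write y_N = X_1 b_N + c with c fixed. Full column rank of X_1 gives
   |b_N|^2 <= C |X_1 b_N|^2, so |y_N|^2 -> oo. Since P_{X_1} fixes X_1 b_N,
   y_N^T P_{X_1} y_N = |y_N|^2 + (c^T P_{X_1} c - |c|^2), whence R_1^2 -> 1.
   For i <> 1, block orthogonality gives X_i^T y_N = X_i^T c, so the
   numerator of R_i^2 is the constant c^T P_{X_i} c and R_i^2 -> 0. *)

Definition sqnorm {R : realType} {m : nat} (v : 'cV[R]_m) : R := (v^T *m v) 0 0.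

Section SquaredNorm.
Context {R : realType}.

Lemma sqnorm_sum {m} (v : 'cV[R]_m) : sqnorm v = \sum_i v i 0 ^+ 2.
Proof. by rewrite /sqnorm mxE; apply: eq_bigr => i _; rewrite mxE expr2. Qed.

Lemma sqnorm_ge0 {m} (v : 'cV[R]_m) : 0 <= sqnorm v.
Proof. by rewrite sqnorm_sum; apply: sumr_ge0 => i _; exact: sqr_ge0. Qed.

Lemma sqnorm_eq0 {m} (v : 'cV[R]_m) : sqnorm v = 0 -> v = 0.
Proof.
rewrite sqnorm_sum => h; apply/matrixP => i j; rewrite (ord1 j) mxE.
apply/eqP; rewrite -sqrf_eq0; apply/eqP.
exact: (psumr_eq0P (fun i _ => sqr_ge0 (v i 0)) h).
Qed.

Lemma sqnormN {m} (v : 'cV[R]_m) : sqnorm (- v) = sqnorm v.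
Proof. by rewrite !sqnorm_sum; apply: eq_bigr => i _; rewrite mxE sqrrN. Qed.

Lemma sqnormD_le {m} (a b : 'cV[R]_m) :
  sqnorm (a + b) <= 2 * sqnorm a + 2 * sqnorm b.
Proof.
rewrite !sqnorm_sum !mulr_sumr -big_split /=; apply: ler_sum => i _.
rewrite mxE; have := sqr_ge0 (a i 0 - b i 0); rewrite !expr2 => h; nra.
Qed.

Lemma normr_entry_le_sqnorm {m} (v : 'cV[R]_m) j :
  `|v j 0| <= Num.sqrt (sqnorm v).
Proof.
rewrite -sqrtr_sqr; apply: ler_wsqrtr; rewrite sqnorm_sum (bigD1 j) //=.
by rewrite lerDl; apply: sumr_ge0 => i _; exact: sqr_ge0.
Qed.

(* Each entry of M v is at most (sum_j |M i j|) |v| in absolute value. *)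
Lemma sqnorm_mulmx_le {m q} (M : 'M[R]_(m, q)) (v : 'cV[R]_q) :
  sqnorm (M *m v) <= (\sum_i (\sum_j `|M i j|) ^+ 2) * sqnorm v.
Proof.
rewrite [sqnorm (M *m v)]sqnorm_sum mulr_suml; apply: ler_sum => i _.
rewrite -[sqnorm v]sqr_sqrtr ?sqnorm_ge0 // -exprMn mxE -real_normK ?num_real //.
apply: lerXn2r; rewrite ?nnegrE ?normr_ge0 ?mulr_ge0 ?sqrtr_ge0 ?sumr_ge0 //.
apply: le_trans (ler_norm_sum _ _ _) _; rewrite mulr_suml.
apply: ler_sum => j _; rewrite normrM; apply: ler_wpM2l => //.
exact: normr_entry_le_sqnorm.
Qed.

End SquaredNorm.

Lemma mxrank_row_mx_le {F : fieldType} {m n1 n2}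
    (A : 'M[F]_(m, n1)) (B : 'M[F]_(m, n2)) :
  (\rank (row_mx A B) <= \rank A + \rank B)%N.
Proof.
rewrite -mxrank_tr tr_row_mx -(mxrank_tr A) -(mxrank_tr B) -addsmxE.
exact: mxrank_adds_leqif.
Qed.

Lemma mxrank_castmx_col {F : fieldType} {m n n'} (e : n = n') (A : 'M[F]_(m, n)) :
  \rank (castmx (erefl m, e) A) = \rank A.
Proof. by case: n' / e; rewrite castmx_id. Qed.

Section FullColumnRank.
Context {R : realType}.

Lemma mxrow_full_rank_ord0 {n k} {p : 'I_k.+1 -> nat}
    {X : forall i : 'I_k.+1, 'M[R]_(n, p i)} :
  \rank (mxrow (fun i => X i)) = (\sum_i p i)%N -> \rank (X ord0) = p ord0.
Proof.
move=> rk; apply/eqP; rewrite eqn_leq rank_leq_col /=.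
move: rk; rewrite mxrow_recl mxrank_castmx_col big_ord_recl => rk.
rewrite -(leq_add2r (\sum_(i < k) p (lift ord0 i))) -rk.
apply: leq_trans (mxrank_row_mx_le _ _) _.
by rewrite leq_add2l rank_leq_col.
Qed.

Lemma gram_unitmx {n q} {X : 'M[R]_(n, q)} :
  \rank X = q -> X^T *m X \in unitmx.
Proof.
move=> rk; rewrite -row_free_unit; apply: inj_row_free => w hw.
have Xw0 : X *m w^T = 0.
  apply: sqnorm_eq0; rewrite /sqnorm trmx_mul trmxK.
  by rewrite mulmxA -(mulmxA w) hw mul0mx mxE.
have wXt0 : w *m X^T = 0 by rewrite -[w]trmxK -trmx_mul Xw0 trmx0.
have frXt : row_free X^T by rewrite /row_free mxrank_tr rk.
by apply/eqP; rewrite -(mulmx_free_eq0 _ frXt) wXt0.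
Qed.

(* The left inverse (X^T X)^-1 X^T makes X bounded below. *)
Lemma sqnorm_le_gram {n q} {X : 'M[R]_(n, q)} :
  X^T *m X \in unitmx ->
  exists2 C : R, 0 <= C & forall b, sqnorm b <= C * sqnorm (X *m b).
Proof.
move=> XtX_unit; set M := invmx (X^T *m X) *m X^T.
exists (\sum_i (\sum_j `|M i j|) ^+ 2).
  by apply: sumr_ge0 => i _; exact: sqr_ge0.
move=> b; have {1}-> : b = M *m (X *m b).
  by rewrite /M mulmxA -(mulmxA _ X^T) mulVmx // mul1mx.
exact: sqnorm_mulmx_le.
Qed.

Lemma projmx_mulmx {n q} {X : 'M[R]_(n, q)} :
  X^T *m X \in unitmx -> projmx X *m X = X.
Proof. by move=> XtX_unit; rewrite /projmx -!mulmxA mulVmx // mulmx1. Qed.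

Lemma trmx_mulmx_projmx {n q} {X : 'M[R]_(n, q)} :
  X^T *m X \in unitmx -> X^T *m projmx X = X^T.
Proof. by move=> XtX_unit; rewrite /projmx !mulmxA mulmxV // mul1mx. Qed.

End FullColumnRank.

Section AffineResponse.
Context {R : realType} {n q : nat} {X : 'M[R]_(n, q)} (c : 'cV[R]_n).
Hypothesis XtX_unit : X^T *m X \in unitmx.

Lemma sqnorm_affine_cvgy (b : nat -> 'cV[R]_q) :
  (fun N => enorm (b N)) @ \oo --> +oo ->
  (fun N => sqnorm (X *m b N + c)) @ \oo --> +oo.
Proof.
move=> /cvgryPge bN; have [C C0 hC] := sqnorm_le_gram XtX_unit.
apply/cvgryPge => A.
apply: filterS (bN (Num.sqrt (2 * (C + 1) * (A + sqnorm c)))) => N hN.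
have hb : 2 * (C + 1) * (A + sqnorm c) <= sqnorm (b N).
  by rewrite -ler_sqrt ?sqnorm_ge0.
have hXb : sqnorm (X *m b N) <= 2 * sqnorm (X *m b N + c) + 2 * sqnorm c.
  rewrite -(sqnormN c); have {1}-> : X *m b N = X *m b N + c + - c by rewrite addrK.
  exact: sqnormD_le.
have := hC (b N); have := sqnorm_ge0 (X *m b N + c).
have := sqnorm_ge0 c; have := sqnorm_ge0 (X *m b N); nra.
Qed.

(* Since P_X fixes X b, only the offset c deviates from a perfect fit. *)
Lemma Rsq_affine_own (b : 'cV[R]_q) :
  let y := X *m b + c in
  Rsq y X = (sqnorm y + ((c^T *m projmx X *m c) 0 0 - sqnorm c)) / sqnorm y.
Proof.
rewrite /= /Rsq; congr (_ / _); set P := projmx X; set u := X *m b.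
have Pu : P *m u = u by rewrite /u mulmxA projmx_mulmx.
have uP : u^T *m P = u^T by rewrite /u trmx_mul -mulmxA trmx_mulmx_projmx.
have -> : (u + c)^T *m P *m (u + c) =
    (u + c)^T *m (u + c) + (c^T *m P *m c - c^T *m c).
  rewrite (raddfD (@trmx _ _ _)) !mulmxDl uP !mulmxDr -(mulmxA c^T P u) Pu.
  by rewrite -!addrA [c^T *m c + _]addrC subrK.
by rewrite /sqnorm !mxE.
Qed.

Lemma Rsq_affine_orthogonal {q'} {X' : 'M[R]_(n, q')} (b : 'cV[R]_q) :
  X'^T *m X = 0 ->
  Rsq (X *m b + c) X' = (c^T *m projmx X' *m c) 0 0 / sqnorm (X *m b + c).
Proof.
move=> orth; rewrite /Rsq /projmx; set y := X *m b + c.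
have Xty : X'^T *m y = X'^T *m c by rewrite mulmxDr mulmxA orth mul0mx add0r.
have ytX : y^T *m X' = c^T *m X' by rewrite -[X']trmxK -!trmx_mul Xty.
by rewrite !mulmxA ytX -!(mulmxA _ _ y) Xty !mulmxA.
Qed.

End AffineResponse.

Section DivergentDenominator.
Variables (R : realType) (D : nat -> R) (K : R).
Hypothesis D_cvgy : D @ \oo --> +oo.

Lemma near_pinfty_small_div (e : R) : 0 < e ->
  \forall N \near \oo, 0 < D N /\ `|K / D N| < e.
Proof.
move=> e0; have /cvgryPgt/(_ (`|K| / e)) hD := D_cvgy.
apply: filterS hD => N hN.
have Dp : 0 < D N by apply: le_lt_trans hN; rewrite divr_ge0 ?normr_ge0 ?ltW.
split => //; rewrite normrM normfV (gtr0_norm Dp) ltr_pdivrMr // mulrC.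
by rewrite -ltr_pdivrMr.
Qed.

Lemma cvg_div_pinfty : (fun N => K / D N) @ \oo --> (0 : R).
Proof.
apply/cvgr0Pnorm_lt => e e0.
by apply: filterS (near_pinfty_small_div _ e0) => N [].
Qed.

Lemma cvg_addr_div_pinfty : (fun N => (D N + K) / D N) @ \oo --> (1 : R).
Proof.
apply: cvg_zero; apply/cvgr0Pnorm_lt => e e0.
apply: filterS (near_pinfty_small_div _ e0) => N [Dp small].
by rewrite !fctE mulrDl divff ?gt_eqF // addrC addKr.
Qed.

End DivergentDenominator.

(* Blocks are indexed by 'I_k.+1; block "1" of the paper is ord0. *)
Theorem lemma4p1 (R : realType) (n k : nat) (p : 'I_k.+1 -> nat)
  (X : forall i : 'I_k.+1, 'M[R]_(n, p i))
  (alpha : R) (beta1 : nat -> 'cV[R]_(p ord0))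
  (beta : forall i : 'I_k.+1, 'cV[R]_(p i)) (eps : 'cV[R]_n)
  (y : nat -> 'cV[R]_n) :
  (* full column rank of X = (X_1, ..., X_k) *)
  \rank (mxrow (fun i => X i)) = (\sum_i p i)%N ->
  (* n > p + 1 *)
  ((\sum_i p i).+1 < n)%N ->
  (* block orthogonality: centered predictors, orthogonal blocks *)
  (forall i, (ones R n)^T *m X i = 0) ->
  (forall i j, i != j -> (X i)^T *m X j = 0) ->
  (* the data of problem Psi_N *)
  (forall N, y N = alpha *: ones R n + X ord0 *m beta1 N
                   + \sum_(i | i != ord0) X i *m beta i + eps) ->
  (* centered response *)
  (forall N, (ones R n)^T *m y N = 0) ->
  (* ||beta_1(N)|| -> infinity *)
  (fun N => enorm (beta1 N)) @ \oo --> +oo ->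
  (fun N => Rsq (y N) (X ord0)) @ \oo --> (1 : R) /\
  (forall i, i != ord0 -> (fun N => Rsq (y N) (X i)) @ \oo --> (0 : R)).
Proof.
move=> rk _ _ orth hy _ beta1_cvgy.
set c := alpha *: ones R n + \sum_(i | i != ord0) X i *m beta i + eps.
have -> : y = fun N => X ord0 *m beta1 N + c.
  by apply: funext => N; rewrite hy /c [alpha *: _ + _]addrC -!addrA.
have XtX_unit := gram_unitmx (mxrow_full_rank_ord0 rk).
have sqnorm_cvgy := sqnorm_affine_cvgy c XtX_unit _ beta1_cvgy.
split=> [|i i_neq0].
  rewrite (funext (fun N => Rsq_affine_own c XtX_unit (beta1 N))).
  exact: cvg_addr_div_pinfty.
have orth_i : (X i)^T *m X ord0 = 0 by apply: orth.
rewrite (funext (fun N => Rsq_affine_orthogonal c (beta1 N) orth_i)).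
exact: cvg_div_pinfty.
Qed.
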